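(* Let $\mathcal{M}$ be the BST merge of a BST mergesort algorithm and let $\pi$ be a permutation of $\{1,\dots,n\}$, plotted as the points $(i,\pi_i)$. The arboral mergesort on $\pi$ returns an arborally satisfied set (containing all points $(i,\pi_i)$).
   Context: Points: horizontal axis is time (input position), vertical axis is key. A set $P$ of points is arborally satisfied if for every two points $x,y\in P$ not on a common horizontal or vertical line, the rectangle with corners $x,y$ contains a point of $P$ other than $x,y$. A top tree of a binary tree is a connected set of nodes containing the root. A BST merge $\mathcal{M}$ takes BSTs $T_A,T_B$ with disjoint keys and, for some top trees $\tau_a$ of $T_A$ and $\tau_b$ of $T_B$, returns a BST $T$ on the union of keys with a top tree $\tau=\tau_a\cup\tau_b$, the subtrees of $T$ hanging off $\tau$ being unchanged subtrees of $T_A$ or $T_B$, and $\tau$ containing the block boundaries (in the sorted merged order, blocks are maximal runs of keys from one input; boundaries are their first and last keys); the keys accessed by the merge are those of $\tau$. A BST mergesort recursively splits the input sequence into two contiguous nonempty parts, sorts each (singletons being one-node BSTs), and BST-merges the results. Arboral mergesort: it follows the same recursion as the BST mergesort on $\pi$; a part of size one is the single point $(i,\pi_i)$. To combine the point sets $A$ (left part) and $B$ (right part): if one is empty return the other; otherwise let $C$ be $A$ and $B$ placed side by side on the time axis, let $S$ be the set of keys accessed by $\mathcal{M}$ when merging the BSTs produced by the mergesort for these two parts, and add the points $(c,s)$ for all $s\in S$ and for each of three columns $c$: the first column of $C$, the rightmost column of $A$, and the last column of $C$. Return the resulting set. *)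

From mathcomp Require Import all_boot.
Set Implicit Arguments. Unset Strict Implicit. Unset Printing Implicit Defensive.

Inductive tree := Leaf | Node of tree & nat & tree.

Fixpoint keys (t : tree) : seq nat :=
  match t with Leaf => [::] | Node l k r => keys l ++ k :: keys r end.

Definition bst (t : tree) : bool := sorted ltn (keys t).

Definition root_key (t : tree) : option nat :=
  if t is Node _ k _ then Some k else None.

Inductive subtree : tree -> tree -> Prop :=
| st_refl t : subtree t t
| st_left s l k r : subtree s l -> subtree s (Node l k r)
| st_right s l k r : subtree s r -> subtree s (Node l k r).

(* A top tree of t (a connected set of nodes containing the root), given by
   its set of keys S (keys of a BST are distinct, so nodes = keys). *)
Definition top_tree (t : tree) (S : pred nat) : Prop :=
  [/\ forall x, S x -> x \in keys t,
      (if root_key t is Some k then S k else False) &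
      forall l k r, subtree (Node l k r) t ->
        forall c, (c = l \/ c = r) ->
          forall k', root_key c = Some k' -> S k' -> S k].

Definition block_boundary (A B : seq nat) (x : nat) : Prop :=
  let s := sort leq (A ++ B) in
  exists2 i, i < size s &
    nth 0 s i = x /\
    [|| i == 0, i.+1 == size s,
        (nth 0 s i.-1 \in A) != (x \in A) | (nth 0 s i.+1 \in A) != (x \in A)].

(* A BST merge: a function returning the merged tree and the accessed keys. *)
Definition merge_fun := tree -> tree -> tree * seq nat.

Definition is_bst_merge (M : merge_fun) : Prop :=
  forall TA TB, bst TA -> bst TB -> TA <> Leaf -> TB <> Leaf ->
    (forall x, x \in keys TA -> x \notin keys TB) ->
    let T := (M TA TB).1 in
    let S := (M TA TB).2 in
    [/\ bst T,
        forall x, (x \in keys T) = (x \in keys TA) || (x \in keys TB) &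
        exists (Sa Sb : pred nat),
          [/\ top_tree TA Sa /\ top_tree TB Sb,
              forall x, (x \in S) <-> (Sa x \/ Sb x),
              top_tree T (fun x => x \in S),
              (* subtrees hanging off tau are unchanged subtrees of TA or TB *)
              forall l k r, subtree (Node l k r) T -> k \in S ->
                forall c, (c = l \/ c = r) ->
                  forall k', root_key c = Some k' -> k' \notin S ->
                    subtree c TA \/ subtree c TB &
              forall x, block_boundary (keys TA) (keys TB) x -> x \in S]].

(* The recursion of a BST mergesort on a fixed input is a full binary tree
   of splits; leaves are the singleton parts (left to right). *)
Inductive split_tree := SLeaf | SNode of split_tree & split_tree.

Fixpoint nleaves (st : split_tree) : nat :=
  match st with SLeaf => 1 | SNode a b => nleaves a + nleaves b end.

(* The BST mergesort on the part of pi starting at 0-based position off. *)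
Fixpoint bst_mergesort (M : merge_fun) (pi : seq nat) (st : split_tree)
  (off : nat) : tree :=
  match st with
  | SLeaf => Node Leaf (nth 0 pi off) Leaf
  | SNode a b =>
      (M (bst_mergesort M pi a off)
         (bst_mergesort M pi b (off + nleaves a))).1
  end.

(* Points (time, key); time i is the 1-based input position. *)
Definition point := (nat * nat)%type.

Fixpoint arboral_mergesort (M : merge_fun) (pi : seq nat) (st : split_tree)
  (off : nat) : seq point :=
  match st with
  | SLeaf => [:: (off.+1, nth 0 pi off)]
  | SNode a b =>
      let A := arboral_mergesort M pi a off in
      let B := arboral_mergesort M pi b (off + nleaves a) in
      let S := (M (bst_mergesort M pi a off)
                  (bst_mergesort M pi b (off + nleaves a))).2 in
      let c1 := off.+1 in
      let c2 := off + nleaves a in                (* rightmost column of A *)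
      let c3 := off + nleaves a + nleaves b in
      if A == [::] then B else if B == [::] then A else
      A ++ B ++ [seq (c1, s) | s <- S] ++ [seq (c2, s) | s <- S]
        ++ [seq (c3, s) | s <- S]
  end.

Definition arborally_satisfied (P : seq point) : Prop :=
  forall x y, x \in P -> y \in P -> x.1 != y.1 -> x.2 != y.2 ->
    exists2 z, z \in P &
      [/\ z != x, z != y,
          minn x.1 y.1 <= z.1 <= maxn x.1 y.1 &
          minn x.2 y.2 <= z.2 <= maxn x.2 y.2].

From mathcomp Require Import all_boot zify.
Set Implicit Arguments. Unset Strict Implicit. Unset Printing Implicit Defensive.

(* Induction along the recursion, with the invariant [merge_inv] relating the
   points X produced on columns l..r to the BST T produced from the same part:
   X is satisfied, its outer columns l and r are closed under ancestors in T,
   and every (t, k) in X is already satisfied against the phantom points (l, a)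
   and (r, a) for all ancestors a of k, which are the points a later merge may
   write on these columns.
   To combine A (columns l..m) with B (columns m+1..r), the keys S of the top
   tree of the merged BST T are written on columns l, m and r. A point of A and
   a point of B have keys in different parts, so a block boundary lies between
   their keys; it is in S and gives a witness on column m. A point (t, k) of A
   or B against a new point (c, s) is witnessed on column c by k or by a key of
   S strictly between s and k; otherwise s is already an ancestor of k in the
   BST of k's part (if s is in S, no block boundary separates s from k and s is
   a top-tree key above the non-top-tree key k; if not, the subtree of s hangs
   off the top tree and is unchanged), and the phantom-point property of that
   part applies. The phantom points of T are handled the same way. *)

Definition ancestor (T : tree) (a k : nat) : Prop :=
  exists L R, subtree (Node L a R) T /\ (k \in keys L \/ k \in keys R).

Definition parent_closed (T : tree) (Q : pred nat) : Prop :=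
  forall l k r, subtree (Node l k r) T -> forall c, (c = l \/ c = r) ->
    forall k', root_key c = Some k' -> Q k' -> Q k.

Definition root_in (Q : pred nat) (t : tree) : Prop :=
  if root_key t is Some k then Q k else False.

Definition strictly_between (a b q : nat) : bool := (a < q < b) || (b < q < a).

Lemma subtree_trans a b c : subtree a b -> subtree b c -> subtree a c.
Proof.
move=> sab sbc; elim: sbc sab => // s l k r _ IH sab.
- exact/st_left/IH.
- exact/st_right/IH.
Qed.

Lemma subtree_l l k r : subtree l (Node l k r).
Proof. by apply/st_left/st_refl. Qed.

Lemma subtree_r l k r : subtree r (Node l k r).
Proof. by apply/st_right/st_refl. Qed.

Lemma subtree_child l k r c : c = l \/ c = r -> subtree c (Node l k r).
Proof. by case=> ->; [exact: subtree_l | exact: subtree_r]. Qed.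

Lemma root_key_mem c k : root_key c = Some k -> k \in keys c.
Proof. by case: c => // ? ? ? [->]; rewrite mem_cat inE eqxx orbT. Qed.

Lemma subtree_leaf c : subtree c Leaf -> c = Leaf.
Proof. by move=> sub; inversion sub. Qed.

Lemma subtree_Node c L x R : subtree c (Node L x R) ->
  [\/ c = Node L x R, subtree c L | subtree c R].
Proof. by move=> sub; inversion sub; [constructor 1 | constructor 2 | constructor 3]. Qed.

Lemma keys_subtree c t : subtree c t -> exists p q, keys t = p ++ keys c ++ q.
Proof.
elim=> [t'|s l k r _ [p [q E]]|s l k r _ [p [q E]]].
- by exists [::], [::]; rewrite cats0.
- by exists p, (q ++ k :: keys r); rewrite /= E -!catA.
- by exists (keys l ++ k :: p), q; rewrite /= E -catA.
Qed.

Lemma subtree_keys_sub c t : subtree c t -> {subset keys c <= keys t}.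
Proof. by move=> /keys_subtree [p [q ->]] x xc; rewrite !mem_cat xc orbT. Qed.

Lemma bst_pairwise t : bst t = pairwise ltn (keys t).
Proof. exact/sorted_pairwise/ltn_trans. Qed.

Lemma bst_subtree c t : subtree c t -> bst t -> bst c.
Proof.
move=> /keys_subtree [p [q E]].
by rewrite !bst_pairwise E !pairwise_cat => /and3P [_ _ /and3P [_ ? _]].
Qed.

Lemma bst_Node L a R : bst (Node L a R) ->
  [/\ bst L, bst R, {in keys L, forall x, x < a} & {in keys R, forall x, a < x}].
Proof.
rewrite !bst_pairwise /= pairwise_cat pairwise_cons allrel_consr.
by case/and3P=> /andP [/allP ltLa _] ? /andP [/allP ltaR ?].
Qed.

Lemma bst_uniq t : bst t -> uniq (keys t).
Proof. by rewrite bst_pairwise; apply/pairwise_uniq/ltnn. Qed.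

Lemma ancestor_subtree c T a k : subtree c T -> ancestor c a k -> ancestor T a k.
Proof. by move=> sub [L [R [sub' kLR]]]; exists L, R; split; first exact: subtree_trans sub. Qed.

Lemma ancestor_neq T a k : bst T -> ancestor T a k -> a != k.
Proof.
move=> bT [L [R [sub kLR]]]; have [_ _ ltLa ltaR] := bst_Node (bst_subtree sub bT).
by case: kLR => [/ltLa|/ltaR]; rewrite neq_ltn => ->; rewrite ?orbT.
Qed.

Lemma parent_closed_subtree c T Q : subtree c T -> parent_closed T Q -> parent_closed c Q.
Proof. by move=> sub clT l k r sub'; apply: clT; apply: subtree_trans sub. Qed.

Section ParentClosed.
Variables (T : tree) (Q : pred nat).
Hypothesis clT : parent_closed T Q.

Lemma parent_closed_root h k : subtree h T -> k \in keys h -> Q k -> root_in Q h.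
Proof.
elim: h => [|L IHL x R IHR] //= sub; rewrite mem_cat inE.
have child c : (c = L \/ c = R) -> root_in Q c -> Q x.
  by case: c => // ? y ? Ec Qy; apply: (clT sub Ec (erefl (Some y))).
case/orP=> [kL|/orP [/eqP-> //|kR]] Qk.
- by apply: (child L); [left | exact: IHL (subtree_trans (subtree_l _ _ _) sub) kL Qk].
- by apply: (child R); [right | exact: IHR (subtree_trans (subtree_r _ _ _) sub) kR Qk].
Qed.

Lemma parent_closed_ancestor a k : ancestor T a k -> Q k -> Q a.
Proof.
move=> [L [R [sub kLR]]] Qk; apply: (parent_closed_root sub _ Qk).
by rewrite /= mem_cat inE; case: kLR => ->; rewrite ?orbT.
Qed.

End ParentClosed.

Lemma top_ancestor T Q s k : bst T -> parent_closed T Q ->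
  s \in keys T -> k \in keys T -> Q s -> ~~ Q k ->
  (forall q, Q q -> ~~ strictly_between s k q) -> ancestor T s k.
Proof.
elim: T => [|L IHL x R IHR] //= bT clT sT kT Qs Qk noQ.
have Qx : Q x := parent_closed_root clT (st_refl _) sT Qs.
have [bL bR ltLx ltxR] := bst_Node bT.
have kx : k != x by apply: contraNneq Qk => ->.
move: sT kT; rewrite !mem_cat !inE (negbTE kx) /= => /or3P [sL|/eqP->|sR] /orP [kL|kR].
- apply: ancestor_subtree (subtree_l _ _ _) _.
  exact: IHL bL (parent_closed_subtree (subtree_l _ _ _) clT) sL kL Qs Qk noQ.
- move: (noQ x Qx) (ltLx s sL) (ltxR k kR); rewrite /strictly_between.
  by clear; lia.
- by exists L, R; split; [exact: st_refl | left].
- by exists L, R; split; [exact: st_refl | right].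
- move: (noQ x Qx) (ltLx k kL) (ltxR s sR); rewrite /strictly_between.
  by clear; lia.
- apply: ancestor_subtree (subtree_r _ _ _) _.
  exact: IHR bR (parent_closed_subtree (subtree_r _ _ _) clT) sR kR Qs Qk noQ.
Qed.

Lemma below_top_tree T Q (P : tree -> Prop) c a :
  parent_closed T Q -> root_in Q T ->
  (forall l k r, subtree (Node l k r) T -> Q k -> forall g, (g = l \/ g = r) ->
     forall k', root_key g = Some k' -> ~~ Q k' -> P g) ->
  (forall g g', subtree g g' -> P g' -> P g) ->
  subtree c T -> root_key c = Some a -> ~~ Q a -> P c.
Proof.
move=> clT rT hang down + + Qa.
have child c' l k r g : subtree (Node l k r) T -> Q k -> (g = l \/ g = r) ->
    subtree c' g -> root_key c' = Some a -> (subtree g T -> root_in Q g -> P c') -> P c'.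
  move=> subT Qk Eg; case: g Eg => [|l' y r'] Eg subc ca IH.
    by move/subtree_leaf: subc ca => ->.
  have subg := subtree_trans (subtree_child k Eg) subT.
  case Qy: (Q y); first exact: IH.
  by apply: down subc _; apply: hang subT Qk _ Eg _ (erefl _) _; rewrite Qy.
suff: forall T', subtree T' T -> root_in Q T' -> subtree c T' -> root_key c = Some a -> P c.
  by move=> /(_ T (st_refl T) rT).
move=> T' subT' rT' sub'; elim: sub' subT' rT' => [t|s l k r subs IH|s l k r subs IH] subT rt ca.
- by move: rt; rewrite /root_in ca (negbTE Qa).
- by apply: (child s l k r l) => //; [left | move=> *; exact: IH].
- by apply: (child s l k r r) => //; [right | move=> *; exact: IH].
Qed.

Lemma bool_switch (f : nat -> bool) i j : i <= j -> f i != f j ->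
  exists2 p, i <= p < j & f p != f p.+1.
Proof.
elim: j => [|j IH]; first by rewrite leqn0 => /eqP ->; rewrite eqxx.
rewrite leq_eqVlt => /predU1P [->|ij] fij; first by rewrite eqxx in fij.
case: (eqVneq (f j) (f j.+1)) => [fj|fj]; last by exists j => //; lia.
have [|p ip fp] := IH ij; first by rewrite fj.
by exists p => //; lia.
Qed.

Lemma boundary_pair (KA KB : seq nat) u v : uniq (KA ++ KB) ->
  u \in KA ++ KB -> v \in KA ++ KB -> (u \in KA) != (v \in KA) ->
  exists b1 b2, [/\ block_boundary KA KB b1, block_boundary KA KB b2,
                    minn u v <= b1 < b2 & b2 <= maxn u v].
Proof.
move=> U; wlog uv : u v / u < v => [W uK vK side|].
  have [uv|vu|uv] := ltngtP u v.
  - by move: (W u v uv uK vK side); rewrite /minn /maxn uv.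
  - by move: (W v u vu vK uK); rewrite eq_sym /minn /maxn vu => /(_ side).
  - by rewrite uv eqxx in side.
set s := sort leq (KA ++ KB) => uK vK side.
have sle : sorted leq s := sort_sorted leq_total _.
have slt : sorted ltn s by rewrite ltn_sorted_uniq_leq sort_uniq U.
have ms : s =i KA ++ KB := mem_sort leq _.
have ltn_nth a b : a < b -> b < size s -> nth 0 s a < nth 0 s b.
  by move=> ab bs; apply: (sorted_ltn_nth ltn_trans) => //; rewrite inE; lia.
have leq_nth a b : a <= b -> b < size s -> nth 0 s a <= nth 0 s b.
  by move=> ab bs; apply: (sorted_leq_nth leq_trans leqnn) => //; rewrite inE; lia.
have [si sj] : index u s < size s /\ index v s < size s by rewrite !index_mem !ms.
have [ni nj] : nth 0 s (index u s) = u /\ nth 0 s (index v s) = v by rewrite !nth_index ?ms.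
move: (index u s) (index v s) si sj ni nj => i j si sj ni nj.
have ij : i < j by rewrite ltnNge; apply/negP => ji; have := leq_nth _ _ ji si; lia.
have [|p /andP [ip pj] sw] := bool_switch (f := fun p => nth 0 s p \in KA) (ltnW ij).
  by rewrite ni nj.
have le_u_p : u <= nth 0 s p by rewrite -ni; apply: leq_nth => //; clear -pj sj; lia.
have lt_p_p1 : nth 0 s p < nth 0 s p.+1 by apply: ltn_nth => //; clear -pj sj; lia.
have le_p1_v : nth 0 s p.+1 <= v by rewrite -nj; apply: leq_nth.
exists (nth 0 s p), (nth 0 s p.+1); split.
- by exists p; rewrite -/s; [clear -pj sj; lia | rewrite eq_sym in sw; rewrite sw !orbT].
- by exists p.+1; rewrite -/s; [clear -pj sj; lia | rewrite /= sw !orbT].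
- by clear -uv le_u_p lt_p_p1; lia.
- by clear -uv le_p1_v; lia.
Qed.

Definition witnessed (P : seq point) (x y : point) : Prop :=
  exists2 z, z \in P & [/\ z != x, z != y, minn x.1 y.1 <= z.1 <= maxn x.1 y.1
                          & minn x.2 y.2 <= z.2 <= maxn x.2 y.2].

Lemma witnessedC P x y : witnessed P x y -> witnessed P y x.
Proof.
case=> z zP [? ? ? ?]; exists z => //.
by rewrite (minnC y.1) (maxnC y.1) (minnC y.2) (maxnC y.2).
Qed.

Lemma witnessed_sub P P' x y : {subset P <= P'} -> witnessed P x y -> witnessed P' x y.
Proof. by move=> sub [z /sub zP' ?]; exists z. Qed.

Record merge_inv (X : seq point) (T : tree) (l r : nat) : Prop := MergeInv {
  inv_range : forall y, y \in X -> y.2 \in keys T /\ l <= y.1 <= r;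
  inv_sat : arborally_satisfied X;
  inv_closedl : forall k a : nat, (l, k) \in X -> ancestor T a k -> (l, a) \in X;
  inv_closedr : forall k a : nat, (r, k) \in X -> ancestor T a k -> (r, a) \in X;
  inv_shadowl : forall t k a : nat, (t, k) \in X -> l < t -> ancestor T a k ->
    witnessed X (t, k) (l, a);
  inv_shadowr : forall t k a : nat, (t, k) \in X -> t < r -> ancestor T a k ->
    witnessed X (t, k) (r, a) }.

Lemma inv_shadow X T l r (t k c a : nat) : merge_inv X T l r ->
  (t, k) \in X -> ancestor T a k -> a != k -> c != t -> (c <= l) || (r <= c) ->
  witnessed X (t, k) (c, a).
Proof.
move=> I tk anc ak ct; have [_ /= /andP [lt tr]] := inv_range I tk.
(* Beyond column l, the rectangle with (c, a) contains the one with (l, a). *)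
case/orP=> [cl|rc].
- have [tl|{}lt] : t = l \/ l < t by lia.
    subst t; exists (l, a); first exact: (inv_closedl I tk anc).
    by rewrite !xpair_eqE /=; split; lia.
  have [[z1 z2] zX] := inv_shadowl I tk lt anc; rewrite /= !xpair_eqE => -[? ? ? ?].
  by exists (z1, z2) => //=; rewrite !xpair_eqE; split; lia.
- have [tr'|{}tr] : t = r \/ t < r by lia.
    subst t; exists (r, a); first exact: (inv_closedr I tk anc).
    by rewrite !xpair_eqE /=; split; lia.
  have [[z1 z2] zX] := inv_shadowr I tk tr anc; rewrite /= !xpair_eqE => -[? ? ? ?].
  by exists (z1, z2) => //=; rewrite !xpair_eqE; split; lia.
Qed.

Lemma mem_column (c : nat) (S : seq nat) (t k : nat) :
  ((t, k) \in [seq (c, s) | s <- S]) = (t == c) && (k \in S).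
Proof. by apply/mapP/andP => [[s sS [-> ->]] | [/eqP -> kS]]; last exists k. Qed.

Section Merge.

Variables (A B : seq point) (TA TB T : tree) (S : seq nat) (Sa Sb : pred nat) (l m r : nat).
Hypotheses (le_lm : l <= m) (lt_mr : m < r)
  (invA : merge_inv A TA l m) (invB : merge_inv B TB m.+1 r)
  (bstA : bst TA) (bstB : bst TB) (bstT : bst T)
  (disjAB : forall x, x \in keys TA -> x \notin keys TB)
  (keysT : forall x, (x \in keys T) = (x \in keys TA) || (x \in keys TB))
  (topA : top_tree TA Sa) (topB : top_tree TB Sb)
  (topAB : forall x, x \in S <-> Sa x \/ Sb x)
  (topT : top_tree T (fun x => x \in S))
  (hanging : forall l0 k r0, subtree (Node l0 k r0) T -> k \in S ->
     forall c, (c = l0 \/ c = r0) -> forall k', root_key c = Some k' -> k' \notin S ->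
     subtree c TA \/ subtree c TB)
  (boundaries : forall x, block_boundary (keys TA) (keys TB) x -> x \in S).

Definition merged : seq point :=
  A ++ B ++ [seq (l, s) | s <- S] ++ [seq (m, s) | s <- S] ++ [seq (r, s) | s <- S].

Lemma mem_merged (t k : nat) : ((t, k) \in merged) =
  [|| (t, k) \in A, (t, k) \in B | (k \in S) && (t \in [:: l; m; r])].
Proof.
rewrite !mem_cat !mem_column !inE.
by case: (k \in S); rewrite ?andbT ?andbF ?orbF.
Qed.

Lemma merged_A y : y \in A -> y \in merged.
Proof. by case: y => t k yA; rewrite mem_merged yA. Qed.

Lemma merged_B y : y \in B -> y \in merged.
Proof. by case: y => t k yB; rewrite mem_merged yB orbT. Qed.

Lemma merged_top (c s : nat) : c \in [:: l; m; r] -> s \in S -> (c, s) \in merged.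
Proof. by move=> cN sS; rewrite mem_merged sS cN !orbT. Qed.

Lemma top_keys s : s \in S -> s \in keys T.
Proof. by case: topT => sub _ _; apply: sub. Qed.

Lemma disjBA x : x \in keys TB -> x \notin keys TA.
Proof. by move=> xB; apply/negP => /disjAB; rewrite xB. Qed.

Lemma uniq_keysAB : uniq (keys TA ++ keys TB).
Proof. by rewrite cat_uniq !bst_uniq // andbT; apply/hasPn => x /disjBA. Qed.

Lemma top_part_closed TX SX : top_tree TX SX ->
  (forall x, x \in S -> x \in keys TX -> SX x) -> (forall x, SX x -> x \in S) ->
  parent_closed TX (fun x => x \in S).
Proof.
move=> [_ _ clX] SX_S S_SX L k R sub c Ec k' ck' k'S; apply: S_SX.
apply: (clX L k R sub c Ec k' ck'); apply: SX_S k'S _.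
exact: subtree_keys_sub (subtree_trans (subtree_child k Ec) sub) _ (root_key_mem ck').
Qed.

Lemma partA_closed : parent_closed TA (fun x => x \in S).
Proof.
apply: top_part_closed topA _ (fun x Sx => proj2 (topAB x) (or_introl Sx)).
case: topB => subB _ _ x /topAB [//|/subB xB] /disjAB; by rewrite xB.
Qed.

Lemma partB_closed : parent_closed TB (fun x => x \in S).
Proof.
apply: top_part_closed topB _ (fun x Sx => proj2 (topAB x) (or_intror Sx)).
case: topA => subA _ _ x /topAB [/subA /disjAB xB|//]; by rewrite (negbTE xB).
Qed.

Lemma top_same_side (s k : nat) : s \in S -> k \in keys T -> k \notin S ->
  ~~ has (strictly_between s k) S -> (s \in keys TA) = (k \in keys TA).
Proof.
move=> sS kT kS /hasPn nob; apply/eqP/negPn/negP => side.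
have mem x : x \in keys T -> x \in keys TA ++ keys TB by rewrite mem_cat -keysT.
have [b1 [b2 [/boundaries b1S /boundaries b2S lt_b1 le_b2]]] :=
  boundary_pair uniq_keysAB (mem s (top_keys sS)) (mem k kT) side.
have b1k : b1 != k by apply: contraNneq kS => <-.
have b2k : b2 != k by apply: contraNneq kS => <-.
move: (nob b1 b1S) (nob b2 b2S); rewrite /strictly_between; clear -b1k b2k lt_b1 le_b2; lia.
Qed.

Lemma top_ancestor_part (s k : nat) : s \in S -> k \notin S ->
  ~~ has (strictly_between s k) S ->
  (k \in keys TA -> ancestor TA s k) /\ (k \in keys TB -> ancestor TB s k).
Proof.
move=> sS kS nob; have noS q : q \in S -> ~~ strictly_between s k q by move/hasPn: nob; apply.
have side kT := top_same_side sS kT kS nob.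
split=> kX.
- have sA : s \in keys TA by rewrite side // keysT kX.
  exact: top_ancestor bstA partA_closed sA kX sS kS noS.
- have kT : k \in keys T by rewrite keysT kX orbT.
  have sB : s \in keys TB.
    by move: (top_keys sS); rewrite keysT side // (negbTE (disjBA kX)).
  exact: top_ancestor bstB partB_closed sB kX sS kS noS.
Qed.

Lemma hanging_ancestor (s k : nat) : s \notin S -> ancestor T s k ->
  (k \in keys TA -> ancestor TA s k) /\ (k \in keys TB -> ancestor TB s k).
Proof.
move=> sS [L [R [sub kLR]]].
have kN : k \in keys (Node L s R) by rewrite /= mem_cat inE; case: kLR => ->; rewrite ?orbT.
have [_ rootT closedT] := topT.
have [subA|subB] : subtree (Node L s R) TA \/ subtree (Node L s R) TB.
  apply: (below_top_tree closedT rootT hanging _ sub (erefl _) sS).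
  by move=> g g' sub' [?|?]; [left | right]; apply: subtree_trans sub' _.
- split=> kX; first by exists L, R.
  by move: (disjAB (subtree_keys_sub subA kN)); rewrite kX.
- split=> kX; last by exists L, R.
  by move: (disjBA (subtree_keys_sub subB kN)); rewrite kX.
Qed.

Lemma merged_shadow (t k c s : nat) : (t, k) \in merged -> c \in [:: l; m; r] ->
  c != t -> s != k -> s \in S \/ ancestor T s k -> witnessed merged (t, k) (c, s).
Proof.
move=> tk cN ct sk sA.
have column q : q \in S -> q != s -> minn k s <= q <= maxn k s ->
    witnessed merged (t, k) (c, s).
  move=> qS qs range; exists (c, q); first exact: merged_top.
  by rewrite !xpair_eqE /=; split; clear -ct qs range; lia.
case kS: (k \in S); first by apply: (column k) => //; clear -sk; lia.
have [/hasP [q qS sq]|nob] := boolP (has (strictly_between s k) S).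
  by apply: (column q) => //; move: sq; rewrite /strictly_between; clear -sk; lia.
have [ancA ancB] : (k \in keys TA -> ancestor TA s k) /\ (k \in keys TB -> ancestor TB s k).
  have [sS|sS] := boolP (s \in S); first by apply: top_ancestor_part; rewrite ?kS.
  by case: sA => [sS'|]; [rewrite sS' in sS | exact: hanging_ancestor].
move: cN tk; rewrite !inE mem_merged => cN /or3P [tkA|tkB|/andP [kS' _]].
- apply: witnessed_sub merged_A _.
  apply: inv_shadow invA tkA (ancA (inv_range invA tkA).1) sk ct _.
  by clear -cN lt_mr; lia.
- apply: witnessed_sub merged_B _.
  apply: inv_shadow invB tkB (ancB (inv_range invB tkB).1) sk ct _.
  by clear -cN le_lm; lia.
- by rewrite kS' in kS.
Qed.

Lemma merged_satAB x y : x \in A -> y \in B -> x.2 != y.2 -> witnessed merged x y.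
Proof.
case: x y => t1 k1 [t2 k2] /= xA yB k12.
have [k1A /= /andP [_ t1m]] := inv_range invA xA.
have [k2B /= /andP [t2m _]] := inv_range invB yB.
have side : (k1 \in keys TA) != (k2 \in keys TA) by rewrite k1A (negbTE (disjBA k2B)).
have k1AB : k1 \in keys TA ++ keys TB by rewrite mem_cat k1A.
have k2AB : k2 \in keys TA ++ keys TB by rewrite mem_cat k2B orbT.
have [b1 [b2 [/boundaries b1S /boundaries b2S lt_b1 le_b2]]] :=
  boundary_pair uniq_keysAB k1AB k2AB side.
have [b [bS bk1 range]] : exists b, [/\ b \in S, b != k1 & minn k1 k2 <= b <= maxn k1 k2].
  by case: (ltnP k1 k2) => k12'; [exists b2 | exists b1]; split=> //;
    clear -lt_b1 le_b2 k12'; lia.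
exists (m, b); first by apply: merged_top; rewrite ?inE ?eqxx ?orbT.
by rewrite !xpair_eqE /=; split; clear -bk1 t1m t2m range; lia.
Qed.

Lemma merged_sat : arborally_satisfied merged.
Proof.
have top_point (t k c s : nat) : (t, k) \in merged -> c \in [:: l; m; r] -> s \in S ->
    c != t -> s != k -> witnessed merged (t, k) (c, s).
  by move=> tk cN sS ct sk; apply: merged_shadow => //; left.
move=> [t1 k1] [t2 k2] x y /= t12 k12.
have t21 : t2 != t1 by rewrite eq_sym.
have k21 : k2 != k1 by rewrite eq_sym.
move: (x) (y); rewrite !mem_merged.
case/or3P=> [xA|xB|/andP [k1S c1]] /or3P [yA|yB|/andP [k2S c2]].
- exact: witnessed_sub merged_A (inv_sat invA xA yA t12 k12).
- exact: merged_satAB.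
- exact: top_point x c2 k2S t21 k21.
- exact/witnessedC/merged_satAB.
- exact: witnessed_sub merged_B (inv_sat invB xB yB t12 k12).
- exact: top_point x c2 k2S t21 k21.
- exact/witnessedC/(top_point _ _ _ _ y c1 k1S t12 k12).
- exact/witnessedC/(top_point _ _ _ _ y c1 k1S t12 k12).
- exists (t1, k2); first exact: merged_top.
  by rewrite !xpair_eqE /=; split; clear -t12 k12; lia.
Qed.

Lemma ancestor_off_top (a k : nat) : ancestor T a k -> a \notin S -> k \notin S.
Proof.
have [_ _ closedT] := topT.
by move=> anc; apply: contra; exact: (parent_closed_ancestor closedT anc).
Qed.

Lemma merged_closedl (k a : nat) : (l, k) \in merged -> ancestor T a k -> (l, a) \in merged.
Proof.
move=> lk anc; have [aS|aS] := boolP (a \in S).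
  by apply: merged_top; rewrite ?inE ?eqxx.
have kS := ancestor_off_top anc aS.
move: lk; rewrite mem_merged (negbTE kS) orbF => /orP [lkA|lkB].
- have [kA _] := inv_range invA lkA.
  exact/merged_A/(inv_closedl invA lkA ((hanging_ancestor aS anc).1 kA)).
- by have [_ /= /andP [lt_ml _]] := inv_range invB lkB; exfalso; clear -le_lm lt_ml; lia.
Qed.

Lemma merged_closedr (k a : nat) : (r, k) \in merged -> ancestor T a k -> (r, a) \in merged.
Proof.
move=> rk anc; have [aS|aS] := boolP (a \in S).
  by apply: merged_top; rewrite ?inE ?eqxx ?orbT.
have kS := ancestor_off_top anc aS.
move: rk; rewrite mem_merged (negbTE kS) orbF => /orP [rkA|rkB].
- by have [_ /= /andP [_ le_rm]] := inv_range invA rkA; exfalso; clear -lt_mr le_rm; lia.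
- have [kB _] := inv_range invB rkB.
  exact/merged_B/(inv_closedr invB rkB ((hanging_ancestor aS anc).2 kB)).
Qed.

Lemma merged_shadowl (t k a : nat) : (t, k) \in merged -> l < t -> ancestor T a k ->
  witnessed merged (t, k) (l, a).
Proof.
move=> tk lt anc; apply: merged_shadow => //; last by right.
- by rewrite inE eqxx.
- by rewrite neq_ltn lt.
- exact: ancestor_neq bstT anc.
Qed.

Lemma merged_shadowr (t k a : nat) : (t, k) \in merged -> t < r -> ancestor T a k ->
  witnessed merged (t, k) (r, a).
Proof.
move=> tk lt anc; apply: merged_shadow => //; last by right.
- by rewrite !inE eqxx !orbT.
- by rewrite neq_ltn lt orbT.
- exact: ancestor_neq bstT anc.
Qed.

Lemma merged_range y : y \in merged -> y.2 \in keys T /\ l <= y.1 <= r.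
Proof.
case: y => t k; rewrite mem_merged keysT => /or3P [tkA|tkB|/andP [kS tN]].
- have [/= -> range] := inv_range invA tkA; split=> //; clear -range lt_mr; lia.
- have [/= -> range] := inv_range invB tkB; split; rewrite ?orbT //; clear -range le_lm; lia.
- rewrite -keysT top_keys //; split=> //.
  by rewrite /= !inE in tN *; clear -tN le_lm lt_mr; lia.
Qed.

Lemma merged_inv : merge_inv merged T l r.
Proof.
split.
- exact: merged_range.
- exact: merged_sat.
- exact: merged_closedl.
- exact: merged_closedr.
- exact: merged_shadowl.
- exact: merged_shadowr.
Qed.

End Merge.

Lemma ancestor_single p a k : ~ ancestor (Node Leaf p Leaf) a k.
Proof.
move=> [L [R [sub kLR]]].
by case/subtree_Node: sub kLR => [[-> _ ->]|/subtree_leaf|/subtree_leaf] //; case.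
Qed.

Lemma merge_inv_single (c p : nat) : merge_inv [:: (c, p)] (Node Leaf p Leaf) c c.
Proof.
split.
- by move=> y /[!inE] /eqP ->; split; rewrite /= ?inE ?leqnn.
- by move=> x y /[!inE] /eqP -> /eqP ->; rewrite eqxx.
- by move=> k a _ /ancestor_single.
- by move=> k a _ /ancestor_single.
- by move=> t k a _ _ /ancestor_single.
- by move=> t k a _ _ /ancestor_single.
Qed.

Lemma nleaves_gt0 st : 0 < nleaves st.
Proof. by elim: st => //= a Ha b Hb; rewrite addn_gt0 Ha. Qed.

Lemma arboral_mergesort_neq0 M pi st off : arboral_mergesort M pi st off != [::].
Proof.
elim: st off => //= a IHa b IHb off.
by rewrite (negbTE (IHb _)); case: (arboral_mergesort M pi a off) (IHa off).
Qed.

Lemma arboral_mergesort_input M pi st off i : off < i <= off + nleaves st ->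
  (i, nth 0 pi i.-1) \in arboral_mergesort M pi st off.
Proof.
elim: st off => [|a IHa b IHb] off /= range.
  have -> : i = off.+1 by lia.
  by rewrite inE.
rewrite !(negbTE (arboral_mergesort_neq0 _ _ _ _)) !mem_cat.
case: (leqP i (off + nleaves a)) => ia.
- by rewrite IHa //; lia.
- by rewrite IHb ?orbT //; lia.
Qed.

Lemma take_drop_disjoint (T : eqType) (s : seq T) off n1 n2 x : uniq s ->
  x \in take n1 (drop off s) -> x \notin take n2 (drop (off + n1) s).
Proof.
move=> U x1; have : uniq (take (n1 + n2) (drop off s)) by apply/take_uniq/drop_uniq.
rewrite takeD drop_drop addnC cat_uniq => /and3P [_ /hasPn dis _].
by apply/negP => /dis; rewrite x1.
Qed.

Lemma arboral_mergesort_inv M (pi : seq nat) st off : is_bst_merge M -> uniq pi ->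
  off + nleaves st <= size pi ->
  [/\ bst (bst_mergesort M pi st off), bst_mergesort M pi st off <> Leaf,
      keys (bst_mergesort M pi st off) =i take (nleaves st) (drop off pi) &
      merge_inv (arboral_mergesort M pi st off) (bst_mergesort M pi st off)
                off.+1 (off + nleaves st)].
Proof.
move=> HM U; elim: st off => [|a IHa b IHb] off /= size_pi.
  have drop_off : drop off pi = nth 0 pi off :: drop off.+1 pi by apply: drop_nth; lia.
  split=> //; first by move=> x; rewrite drop_off /= take0.
  by rewrite addn1; apply: merge_inv_single.
have [na_gt0 nb_gt0] := (nleaves_gt0 a, nleaves_gt0 b).
have [|bA nA kA invA] := IHa off; first by lia.
have [|bB nB kB invB] := IHb (off + nleaves a); first by lia.
set TA := bst_mergesort M pi a off in bA nA kA invA *.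
set TB := bst_mergesort M pi b (off + nleaves a) in bB nB kB invB *.
have disj x : x \in keys TA -> x \notin keys TB by rewrite kA kB; apply: take_drop_disjoint.
have [bT kT [Sa [Sb [[tA tB] SE tT hang bnd]]]] := HM TA TB bA bB nA nB disj.
split=> //.
- have [x xA] : exists x, x \in keys TA.
    by case: (TA) nA => [|L x R] // _; exists x; apply: root_key_mem.
  by move=> EL; move: (kT x); rewrite EL xA.
- by move=> x; rewrite kT kA kB takeD drop_drop (addnC (nleaves a) off) mem_cat.
- rewrite !(negbTE (arboral_mergesort_neq0 _ _ _ _)) addnA.
  have le_lm : off.+1 <= off + nleaves a by lia.
  have lt_mr : off + nleaves a < off + nleaves a + nleaves b by lia.
  exact: merged_inv le_lm lt_mr invA invB bA bB bT disj kT tA tB SE tT hang bnd.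
Qed.

Theorem lemma1 (M : merge_fun) (n : nat) (pi : seq nat) (st : split_tree) :
  is_bst_merge M ->
  perm_eq pi (iota 1 n) ->
  nleaves st = n ->
  let P := arboral_mergesort M pi st 0 in
  arborally_satisfied P /\
  (forall i, 0 < i <= n -> (i, nth 0 pi i.-1) \in P).
Proof.
move=> HM perm_pi nleaves_st P; split.
- have U : uniq pi by rewrite (perm_uniq perm_pi) iota_uniq.
  have [] := arboral_mergesort_inv (st := st) (off := 0) HM U.
    by rewrite add0n (perm_size perm_pi) size_iota nleaves_st.
  by move=> _ _ _ /inv_sat.
- by rewrite -nleaves_st; exact: arboral_mergesort_input.
Qed.
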